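(* Let $n\ge 1$ and let $\mathcal{M}^n$ denote the set of real symmetric positive semidefinite $n\times n$ matrices. Let $F:(\mathcal{M}^n)^n\to\mathbb{R}$ be a nonnegative function which is additive in each variable (i.e. $F(\dots,A+A',\dots)=F(\dots,A,\dots)+F(\dots,A',\dots)$ in each argument, the others fixed). If there is a constant $c$ such that $F(A_1,\dots,A_n)\le c\,D(A_1,\dots,A_n)$ for all $A_1,\dots,A_n\in\mathcal{M}^n$, then there is a constant $a$ with $F=a\,D$ on $(\mathcal{M}^n)^n$, where $D$ is the mixed discriminant.
   Context: The mixed discriminant $D:(\mathcal{M}^n)^n\to\mathbb{R}$ is the unique symmetric function such that $\det(\lambda_1A_1+\dots+\lambda_mA_m)=\sum_{i_1,\dots,i_n=1}^m\lambda_{i_1}\cdots\lambda_{i_n}D(A_{i_1},\dots,A_{i_n})$ for all $m\in\mathbb{N}$, $A_1,\dots,A_m\in\mathcal{M}^n$ and $\lambda_1,\dots,\lambda_m\ge 0$. *)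

From HB Require Import structures.
From mathcomp Require Import all_boot all_order all_algebra all_fingroup.
From mathcomp Require Import reals.
Set Implicit Arguments. Unset Strict Implicit. Unset Printing Implicit Defensive.
Import Order.TTheory GRing.Theory Num.Theory.
Local Open Scope ring_scope.

Definition psd (R : realType) (n : nat) (A : 'M[R]_n) : Prop :=
  A^T = A /\ forall x : 'cV[R]_n, 0 <= (x^T *m A *m x) 0 0.

Definition all_psd (R : realType) (n : nat) (A : {ffun 'I_n -> 'M[R]_n}) : Prop :=
  forall i, psd (A i).

Definition upd (R : realType) (n : nat) (A : {ffun 'I_n -> 'M[R]_n}) (i : 'I_n)
  (B : 'M[R]_n) : {ffun 'I_n -> 'M[R]_n} :=
  [ffun j => if j == i then B else A j].

Definition is_mixed_discriminant (R : realType) (n : nat)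
  (D : {ffun 'I_n -> 'M[R]_n} -> R) : Prop :=
  (forall (A : {ffun 'I_n -> 'M[R]_n}) (s : 'S_n),
      all_psd A -> D [ffun j => A (s j)] = D A) /\
  (forall (m : nat) (B : 'I_m -> 'M[R]_n) (lam : 'I_m -> R),
      (forall k, psd (B k)) -> (forall k, 0 <= lam k) ->
      \det (\sum_(k < m) lam k *: B k) =
      \sum_(s : {ffun 'I_n -> 'I_m}) (\prod_(j < n) lam (s j)) * D [ffun j => B (s j)]).

Definition multiadditive (R : realType) (n : nat) (F : {ffun 'I_n -> 'M[R]_n} -> R) : Prop :=
  forall (A : {ffun 'I_n -> 'M[R]_n}) (i : 'I_n) (B B' : 'M[R]_n),
    all_psd A -> psd B -> psd B' ->
    F (upd A i (B + B')) = F (upd A i B) + F (upd A i B').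

From HB Require Import structures.
From mathcomp Require Import all_boot all_order all_algebra all_fingroup.
From mathcomp Require Import reals.
From mathcomp Require Import ring lra zify.
Import Order.TTheory GRing.Theory Num.Theory.
Local Open Scope ring_scope.
Set Implicit Arguments. Unset Strict Implicit. Unset Printing Implicit Defensive.

(* Both sides are multiadditive, and polarization writes every symmetric matrix as a
   difference of sums of rank-one psd matrices, so it suffices to compare F and D on
   tuples (x_1^T x_1, ..., x_n^T x_n).  Inclusion-exclusion over the images of
   f : 'I_n -> 'I_n turns the defining expansion of D into
   D A = 1/n! sum_(sigma injective) det (row i of A_(sigma i)), whence D is multiadditive
   and D (x_1^T x_1, ..., x_n^T x_n) = det X ^ 2 / n! for X with rows x_k.
   A nonnegative additive function is positively homogeneous, so in each row y the map
   y |-> F (.., y^T y, ..) is a nonnegative quadratic form; F <= c D makes it vanish on the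
   hyperplane where the determinant does, so it is a multiple of det ^ 2.  Moving from X
   to 1 one row at a time through invertible matrices gives
   F (x_1^T x_1, ..., x_n^T x_n) = F (E_11, ..., E_nn) * det X ^ 2. *)

Section ArchimedeanFunctions.
Variable R : archiRealFieldType.

Lemma natmul_bounded_le0 (x c : R) : (forall N : nat, N%:R * x <= c) -> x <= 0.
Proof.
move=> bnd; rewrite leNgt; apply/negP => x_gt0.
have c_ge0 : 0 <= c by have := bnd 0; rewrite mul0r.
have := archi_boundP (divr_ge0 c_ge0 (ltW x_gt0)).
by rewrite ltr_pdivrMr // ltNge bnd.
Qed.

Lemma additive_ge0_homo (phi : R -> R) :
  (forall s t, 0 <= s -> 0 <= t -> phi (s + t) = phi s + phi t) ->
  (forall s, 0 <= s -> 0 <= phi s) ->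
  forall s, 0 <= s -> phi s = s * phi 1.
Proof.
move=> phiD phi_ge0.
have phiMn k s : 0 <= s -> phi (s *+ k) = phi s *+ k.
  move=> s_ge0; elim: k => [|k IHk]; last by rewrite !mulrS phiD ?mulrn_wge0 ?IHk.
  by have := phiD 0 0 (lexx _) (lexx _); rewrite !mulr0n addr0; lra.
have phi_nat k : phi k%:R = k%:R * phi 1 by rewrite phiMn ?ler01 // mulr_natl.
have phi_mono s t : s <= t -> 0 <= s -> phi s <= phi t.
  by move=> st s_ge0; rewrite -(subrK s t) phiD ?subr_ge0 // lerDr phi_ge0 ?subr_ge0.
move=> s s_ge0; have phi1_ge0 := phi_ge0 1 ler01.
suff : `|phi s - s * phi 1| <= 0 by rewrite normr_le0 subr_eq0 => /eqP.
apply: (natmul_bounded_le0 (c := phi 1)) => N.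
rewrite -(ger0_norm (ler0n _ N)) -normrM ler_norml.
(* [phi (N s)] and [N s * phi 1] both lie in [[k phi 1, (k+1) phi 1]], [k = floor (N s)] *)
have Ns_ge0 : 0 <= N%:R * s by rewrite mulr_ge0.
have /andP[lo hi] := truncn_itv Ns_ge0; set k := Num.Def.truncn _ in lo hi.
have phiNs : phi (N%:R * s) = N%:R * phi s by rewrite !mulr_natl phiMn.
have := phi_mono _ _ lo (ler0n _ k); have := phi_mono _ _ (ltW hi) Ns_ge0.
have := ler_wpM2r phi1_ge0 lo; have := ler_wpM2r phi1_ge0 (ltW hi).
rewrite !phi_nat phiNs -natr1; lra.
Qed.

Lemma second_difference0_ge0 (u : nat -> R) :
  (forall m, 0 <= u m) -> (forall m, u m.+2 + u m = 2 * u m.+1) -> u 0 <= u 1.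
Proof.
move=> u_ge0 u_rec; set d := u 1 - u 0.
have u_lin m : u m = u 0 + m%:R * d /\ u m.+1 = u 0 + m.+1%:R * d.
  elim: m => [|m [IHm IHm1]]; first by rewrite /d mulr0n mulr1n; split; [ring | ring].
  by split=> //; have := u_rec m; rewrite IHm1 IHm -!natr1; lra.
rewrite -subr_ge0 -oppr_le0; apply: (natmul_bounded_le0 (c := u 0)) => N.
by have := u_ge0 N; rewrite (u_lin N).1 /d; lra.
Qed.

Lemma midpoint_affine_ge0_const (P : R -> R) :
  (forall t, 0 <= P t) -> (forall t, P (t + 1) + P (t - 1) = 2 * P t) -> P 1 = P 0.
Proof.
move=> P_ge0 P_rec.
have up : P 0%:R <= P 1%:R.
  apply: (second_difference0_ge0 (u := fun m => P m%:R)) => // m.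
  by rewrite -[m%:R](addrK 1) [m%:R + 1]natr1 -[m.+2%:R]natr1 P_rec.
have down : P (- 0%:R) <= P (- 1%:R).
  apply: (second_difference0_ge0 (u := fun m => P (- m%:R))) => // m.
  have e1 : - m%:R = - m.+1%:R + 1 :> R by rewrite -natr1 opprD addrNK.
  have e2 : - m.+2%:R = - m.+1%:R - 1 :> R by rewrite -natr1 opprD.
  by rewrite e1 e2 addrC P_rec.
by have := P_rec 0; rewrite mulr0n mulr1n oppr0 in up down *; rewrite add0r sub0r; lra.
Qed.

End ArchimedeanFunctions.

Section QuadraticFormVanishingOnHyperplane.
Variables (R : archiRealFieldType) (V : lmodType R) (q l : V -> R).
Hypothesis q_ge0 : forall y, 0 <= q y.
Hypothesis q_parallelogram : forall u h, q (u + h) + q (u - h) = 2 * q u + 2 * q h.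
Hypothesis qZ : forall t y, q (t *: y) = t ^+ 2 * q y.
Hypothesis l_linear : forall t a b, l (t *: a + b) = t * l a + l b.
Hypothesis q_ker : forall y, l y = 0 -> q y = 0.

Lemma quadratic_shift_ker u h : l h = 0 -> q (u + h) = q u.
Proof.
move=> lh0; have := midpoint_affine_ge0_const (P := fun t => q (u + t *: h)).
rewrite scale1r scale0r addr0; apply=> // t.
rewrite scalerDl scalerBl scale1r !addrA q_parallelogram (q_ker lh0).
by rewrite mulr0 addr0.
Qed.

Lemma quadratic_ker_proportional y0 y : q y * l y0 ^+ 2 = q y0 * l y ^+ 2.
Proof.
have [ly0_0 | ly0_neq0] := eqVneq (l y0) 0.
  by rewrite ly0_0 (q_ker ly0_0) mul0r expr2 !mulr0.
set c := l y / l y0.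
have lh0 : l (y - c *: y0) = 0.
  by rewrite addrC -scaleNr l_linear mulNr /c divfK // addNr.
rewrite -[in q y](subrK (c *: y0) y) addrC quadratic_shift_ker // qZ /c.
by field.
Qed.

End QuadraticFormVanishingOnHyperplane.

Section RowSelection.
Variables (R : comRingType) (n : nat).

Definition pick_rows m (B : 'I_m -> 'M[R]_n) (f : {ffun 'I_n -> 'I_m}) : 'M[R]_n :=
  \matrix_(i, j) B (f i) i j.

Lemma det_sumZ_expand m (B : 'I_m -> 'M[R]_n) (lam : 'I_m -> R) :
  \det (\sum_(k < m) lam k *: B k) =
  \sum_(f : {ffun 'I_n -> 'I_m}) (\prod_j lam (f j)) * \det (pick_rows B f).
Proof.
have expand_prod (s : 'S_n) : \prod_i (\sum_(k < m) lam k *: B k) i (s i) =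
    \sum_(f : {ffun 'I_n -> 'I_m}) \prod_i (lam (f i) * B (f i) i (s i)).
  under eq_bigr => i _ do rewrite summxE.
  rewrite bigA_distr_bigA; apply: eq_bigr => f _.
  by apply: eq_bigr => i _; rewrite mxE.
rewrite /determinant; under eq_bigr => s _ do rewrite expand_prod mulr_sumr.
rewrite exchange_big /=; apply: eq_bigr => f _.
rewrite mulr_sumr; apply: eq_bigr => s _.
rewrite big_split /= mulrCA; congr (_ * (_ * _)).
by apply: eq_bigr => i _; rewrite mxE.
Qed.

Lemma det_rowsub_ninj (f : {ffun 'I_n -> 'I_n}) (X : 'M[R]_n) :
  ~~ injectiveb f -> \det (rowsub f X) = 0.
Proof.
case/injectivePn => i1 [i2 neq_i12 eq_f12].
by apply: (determinant_alternate neq_i12) => j; rewrite !mxE eq_f12.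
Qed.

Definition rank1 (x : 'rV[R]_n) : 'M[R]_n := x^T *m x.

Lemma rank1E x a b : rank1 x a b = x 0 a * x 0 b.
Proof. by rewrite !mxE big_ord1 !mxE. Qed.

Lemma rank1Z (t : R) x : rank1 (t *: x) = t ^+ 2 *: rank1 x.
Proof. by apply/matrixP => a b; rewrite !(rank1E, mxE); ring. Qed.

Lemma rank1_parallelogram u h :
  rank1 (u + h) + rank1 (u - h) = (rank1 u + rank1 u) + (rank1 h + rank1 h).
Proof. by apply/matrixP => a b; rewrite !(rank1E, mxE); ring. Qed.

Lemma rank1_polarization i j :
  rank1 (delta_mx 0 i + delta_mx 0 j) - rank1 (delta_mx 0 i - delta_mx 0 j) =
  2%:R *: (delta_mx i j + delta_mx j i).
Proof.
apply/matrixP => a b; rewrite !(rank1E, mxE) /=.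
by case: (a == i); case: (a == j); case: (b == i); case: (b == j); rewrite /=; ring.
Qed.

Definition rank1_rows (X : 'M[R]_n) : {ffun 'I_n -> 'M[R]_n} :=
  [ffun k => rank1 (row k X)].

Lemma det_pick_rows_rank1 X (f : {ffun 'I_n -> 'I_n}) :
  \det (pick_rows (rank1_rows X) f) = (\prod_i X (f i) i) * \det (rowsub f X).
Proof.
have -> : pick_rows (rank1_rows X) f = diag_mx (\row_i X (f i) i) *m rowsub f X.
  by rewrite mul_diag_mx; apply/matrixP => i j; rewrite !mxE ffunE rank1E !mxE.
by rewrite det_mulmx det_diag; congr (_ * _); apply: eq_bigr => i _; rewrite mxE.
Qed.

Lemma sum_det_pick_rows_rank1 X :
  \sum_(f : {ffun 'I_n -> 'I_n} | injectiveb f) \det (pick_rows (rank1_rows X) f) =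
  \det X ^+ 2.
Proof.
have XtX : \sum_(k < n) 1 *: rank1_rows X k = X^T *m X.
  apply/matrixP => a b; rewrite summxE !mxE; apply: eq_bigr => k _.
  by rewrite scale1r ffunE rank1E !mxE.
rewrite expr2 -{1}det_tr -det_mulmx -XtX det_sumZ_expand big_mkcond /=.
apply: eq_bigr => f _; rewrite big1 // mul1r.
by case: ifPn => // f_ninj; rewrite det_pick_rows_rank1 det_rowsub_ninj ?mulr0.
Qed.

Definition set_row (X : 'M[R]_n) i (y : 'rV[R]_n) : 'M[R]_n :=
  \matrix_(r, j) if r == i then y 0 j else X r j.

Lemma row_set_row X i y k : row k (set_row X i y) = if k == i then y else row k X.
Proof. by apply/rowP => j; rewrite !mxE; case: (k == i); rewrite ?mxE. Qed.

Lemma set_row_id X i : set_row X i (row i X) = X.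
Proof. by apply/matrixP => r j; rewrite !mxE; case: eqP => // ->. Qed.

Lemma det_set_row X i y : \det (set_row X i y) = \sum_j y 0 j * cofactor X i j.
Proof.
rewrite (expand_det_row _ i); apply: eq_bigr => j _; rewrite mxE eqxx.
congr (_ * (_ * \det _)); apply/matrixP => r c; rewrite !mxE.
by rewrite eq_sym (negbTE (neq_lift i r)).
Qed.

Lemma det_set_row_linear X i t a b :
  \det (set_row X i (t *: a + b)) = t * \det (set_row X i a) + \det (set_row X i b).
Proof.
rewrite !det_set_row mulr_sumr -big_split; apply: eq_bigr => j _.
by rewrite !mxE mulrDl mulrA.
Qed.

Lemma det_set_row_delta X i j : \det (set_row X i (delta_mx 0 j)) = cofactor X i j.
Proof.
rewrite det_set_row (bigD1 j) //= big1 ?addr0 => [|k k_neq_j]; rewrite mxE.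
  by rewrite !eqxx mul1r.
by rewrite (negbTE k_neq_j) andbF mul0r.
Qed.

Lemma set_row_det_neq0 X Y i : \det X != 0 -> \det Y != 0 ->
  exists v, \det (set_row X i v) != 0 /\ \det (set_row Y i v) != 0.
Proof.
have cofactor_neq0 (Z : 'M[R]_n) : \det Z != 0 -> exists j, cofactor Z i j != 0.
  move=> detZ; apply/existsP; apply: contraNT detZ => /existsPn cof0; apply/eqP.
  by rewrite (expand_det_row _ i) big1 // => j _; rewrite (eqP (negbNE (cof0 j))) mulr0.
move=> /cofactor_neq0[jx cofX] /cofactor_neq0[jy cofY].
have [cofYx | ?] := eqVneq (cofactor Y i jx) 0; last first.
  by exists (delta_mx 0 jx); rewrite !det_set_row_delta.
have [cofXy | ?] := eqVneq (cofactor X i jy) 0; last first.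
  by exists (delta_mx 0 jy); rewrite !det_set_row_delta.
exists (1 *: delta_mx 0 jx + delta_mx 0 jy).
by rewrite !det_set_row_linear !det_set_row_delta cofYx cofXy !mul1r add0r addr0.
Qed.

Lemma invertible_row_invariant_const T (g : 'M[R]_n -> T) :
  (forall X i v, \det X != 0 -> \det (set_row X i v) != 0 -> g (set_row X i v) = g X) ->
  forall X Y, \det X != 0 -> \det Y != 0 -> g X = g Y.
Proof.
move=> g_row X Y detX detY.
(* replace the rows of [X] and [Y] one at a time by common rows, keeping both invertible *)
suff: forall k, (k <= n)%N -> exists X' Y', [/\ g X' = g X, g Y' = g Y, \det X' != 0,
  \det Y' != 0 & forall r : 'I_n, (r < k)%N -> row r X' = row r Y'].
  case/(_ n (leqnn n)) => X' [Y' [<- <- _ _ eq_rows]].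
  by congr g; apply/row_matrixP => r; apply: eq_rows.
elim=> [_ | k IHk lt_kn]; first by exists X, Y.
have [X' [Y' [gX' gY' detX' detY' eq_rows]]] := IHk (ltnW lt_kn).
have [v [detXv detYv]] := set_row_det_neq0 (Ordinal lt_kn) detX' detY'.
exists (set_row X' (Ordinal lt_kn) v), (set_row Y' (Ordinal lt_kn) v).
split; rewrite ?g_row //= => r lt_rk; rewrite !row_set_row.
case: eqP => // /eqP r_neq_k; apply: eq_rows.
by move: lt_rk r_neq_k; rewrite ltnS leq_eqVlt -val_eqE /= => /orP[-> //|].
Qed.

End RowSelection.

Section PositiveSemidefinite.
Variables (R : realType) (n : nat).
Local Notation tuple := {ffun 'I_n -> 'M[R]_n}.

Lemma psd_rank1 (x : 'rV[R]_n) : psd (rank1 x).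
Proof.
split=> [|y]; first by rewrite /rank1 trmx_mul trmxK.
rewrite /rank1 !mulmxA -mulmxA -trmx_mul !mxE big_ord1 mxE -expr2.
exact: sqr_ge0.
Qed.

Lemma psd0 : psd (0 : 'M[R]_n).
Proof. by have := psd_rank1 0; rewrite /rank1 mulmx0. Qed.

Lemma psdD (A B : 'M[R]_n) : psd A -> psd B -> psd (A + B).
Proof.
move=> [symA A_ge0] [symB B_ge0]; split=> [|x]; first by rewrite linearD /= symA symB.
by rewrite mulmxDr mulmxDl mxE addr_ge0.
Qed.

Lemma psdZ (c : R) (A : 'M[R]_n) : 0 <= c -> psd A -> psd (c *: A).
Proof.
move=> c_ge0 [symA A_ge0]; split=> [|x]; first by rewrite linearZ /= symA.
by rewrite -scalemxAr -scalemxAl mxE mulr_ge0.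
Qed.

Lemma psd_sum (I : finType) (P : I -> 'M[R]_n) :
  (forall p, psd (P p)) -> psd (\sum_p P p).
Proof. by move=> P_psd; apply: big_ind => //; [exact: psd0 | exact: psdD]. Qed.

Lemma all_psd_upd (A : tuple) i B : all_psd A -> psd B -> all_psd (upd A i B).
Proof. by move=> A_psd B_psd j; rewrite ffunE; case: ifP. Qed.

Lemma upd_id (A : tuple) i : upd A i (A i) = A.
Proof. by apply/ffunP => j; rewrite ffunE; case: eqP => // ->. Qed.

Lemma all_psd_rank1_rows (X : 'M[R]_n) : all_psd (rank1_rows X).
Proof. by move=> k; rewrite ffunE; apply: psd_rank1. Qed.

Lemma rank1_rows_set_row (X : 'M[R]_n) i y :
  rank1_rows (set_row X i y) = upd (rank1_rows X) i (rank1 y).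
Proof. by apply/ffunP => k; rewrite !ffunE row_set_row; case: (k == i). Qed.

(* polarization: [A = sum_(i,j) A_ij / 4 * (rank1 (e_i + e_j) - rank1 (e_i - e_j))] *)
Lemma sym_rank1_decomposition (A : 'M[R]_n) : A^T = A ->
  exists pv rv : 'I_n * 'I_n -> 'rV[R]_n,
    \sum_p rank1 (pv p) = A + \sum_p rank1 (rv p).
Proof.
move=> symA.
pose u (p : 'I_n * 'I_n) : 'rV[R]_n := delta_mx 0 p.1 + delta_mx 0 p.2.
pose w (p : 'I_n * 'I_n) : 'rV[R]_n := delta_mx 0 p.1 - delta_mx 0 p.2.
pose c (p : 'I_n * 'I_n) := A p.1 p.2 / 4%:R.
have polarize : \sum_p c p *: (rank1 (u p) - rank1 (w p)) = A.
  have halfA : \sum_p (A p.1 p.2 / 2%:R) *: delta_mx p.1 p.2 = 2%:R^-1 *: A.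
    rewrite -(pair_bigA _ (fun i j => (A i j / 2%:R) *: delta_mx i j)) /=.
    rewrite {2}[A]matrix_sum_delta scaler_sumr; apply: eq_bigr => i _.
    by rewrite scaler_sumr; apply: eq_bigr => j _; rewrite scalerA mulrC.
  have halfAt : \sum_p (A p.1 p.2 / 2%:R) *: delta_mx p.2 p.1 = 2%:R^-1 *: A.
    rewrite -[in RHS]symA -linearZ /= -halfA linear_sum /=.
    by apply: eq_bigr => p _; rewrite linearZ /= trmx_delta.
  rewrite (eq_bigr (fun p => (A p.1 p.2 / 2%:R) *: delta_mx p.1 p.2 +
                             (A p.1 p.2 / 2%:R) *: delta_mx p.2 p.1)); last first.
    by move=> p _; rewrite rank1_polarization scalerA -scalerDr /c; congr (_ *: _); field.
  by rewrite big_split /= halfA halfAt -scalerDl -[RHS]scale1r; congr (_ *: _); field.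
pose pv p := if 0 <= c p then Num.sqrt (c p) *: u p else Num.sqrt (- c p) *: w p.
pose rv p := if 0 <= c p then Num.sqrt (c p) *: w p else Num.sqrt (- c p) *: u p.
exists pv, rv; rewrite -[in RHS]polarize -big_split /=; apply: eq_bigr => p _.
rewrite /pv /rv; case: (leP 0 (c p)) => [c_ge0 | /ltW c_le0]; rewrite !rank1Z sqr_sqrtr //.
- by rewrite scalerBr subrK.
- by rewrite scalerBr !scaleNr addrC addKr.
- by rewrite oppr_ge0.
Qed.

End PositiveSemidefinite.

Arguments psd0 {R n}.

Section Multiadditive.
Variables (R : realType) (n : nat).
Local Notation tuple := {ffun 'I_n -> 'M[R]_n}.

Section OneFunction.
Variable G : tuple -> R.
Hypothesis G_add : multiadditive G.

Lemma multiadditive_upd0 (A : tuple) i : all_psd A -> G (upd A i 0) = 0.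
Proof. by move=> A_psd; have := G_add i A_psd psd0 psd0; rewrite addr0; lra. Qed.

Lemma multiadditive_sum (A : tuple) i (I : finType) (P : I -> 'M[R]_n) :
  all_psd A -> (forall p, psd (P p)) ->
  G (upd A i (\sum_p P p)) = \sum_p G (upd A i (P p)).
Proof.
move=> A_psd P_psd.
pose K (B : 'M[R]_n) (x : R) := psd B /\ G (upd A i B) = x.
suff [] : K (\sum_p P p) (\sum_p G (upd A i (P p))) by [].
apply: (big_rec2 K); first by split; [exact: psd0 | exact: multiadditive_upd0].
by move=> p B x _ [B_psd <-]; split; [exact: psdD | exact: G_add].
Qed.

Lemma multiadditive_homo (A : tuple) i B (s : R) :
  (forall A, all_psd A -> 0 <= G A) -> all_psd A -> psd B -> 0 <= s ->
  G (upd A i (s *: B)) = s * G (upd A i B).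
Proof.
move=> G_ge0 A_psd B_psd; rewrite -[in G (upd A i B)](scale1r B).
apply: (additive_ge0_homo (phi := fun s => G (upd A i (s *: B))))
  => [t t' t_ge0 t'_ge0 | t t_ge0].
  by rewrite scalerDl G_add //; apply: psdZ.
by apply/G_ge0/all_psd_upd/psdZ.
Qed.

End OneFunction.

Section TwoFunctions.
Variables G H : tuple -> R.
Hypotheses (G_add : multiadditive G) (H_add : multiadditive H).

Lemma multiadditive_eq_rank1_slot (A : tuple) i : all_psd A ->
  (forall y, G (upd A i (rank1 y)) = H (upd A i (rank1 y))) -> G A = H A.
Proof.
move=> A_psd GH_rank1.
have [pv [rv decA]] := sym_rank1_decomposition (A_psd i).1.
have expand K : multiadditive K -> K A =
    \sum_p K (upd A i (rank1 (pv p))) - \sum_p K (upd A i (rank1 (rv p))).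
  move=> K_add; have rank1_psd (v : 'I_n * 'I_n -> 'rV[R]_n) p : psd (rank1 (v p)).
    exact: psd_rank1.
  rewrite -!(multiadditive_sum K_add) // decA K_add ?upd_id ?addrK //.
  exact: psd_sum.
by rewrite !expand //; congr (_ - _); apply: eq_bigr => p _; apply: GH_rank1.
Qed.

Lemma multiadditive_eq_rank1_rows :
  (forall X, G (rank1_rows X) = H (rank1_rows X)) ->
  forall A : tuple, all_psd A -> G A = H A.
Proof.
move=> GH_rank1_rows.
suff GH_from j : (j <= n)%N -> forall (X : 'M[R]_n) (A : tuple), all_psd A ->
    (forall k : 'I_n, (j <= k)%N -> A k = rank1 (row k X)) -> G A = H A.
  by move=> A A_psd; apply: (GH_from n (leqnn n) 0) => // k; rewrite leqNgt ltn_ord.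
elim: j => [_ X A _ A_rows | j IHj lt_jn X A A_psd A_rows].
  have -> : A = rank1_rows X by apply/ffunP => k; rewrite ffunE A_rows.
  exact: GH_rank1_rows.
apply: (multiadditive_eq_rank1_slot (i := Ordinal lt_jn)) => // y.
apply: (IHj (ltnW lt_jn) (set_row X (Ordinal lt_jn) y)); first exact/all_psd_upd/psd_rank1.
move=> k le_jk; rewrite ffunE row_set_row; case: eqP => // /eqP k_neq_j.
by apply: A_rows; move: le_jk k_neq_j; rewrite leq_eqVlt -val_eqE eq_sym => /orP[->|].
Qed.

End TwoFunctions.
End Multiadditive.

Section MixedDiscriminant.
Variables (R : realType) (n : nat).
Local Notation tuple := {ffun 'I_n -> 'M[R]_n}.

Lemma det_pick_rows_upd_add (A : tuple) i B B' (f : {ffun 'I_n -> 'I_n}) :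
  injectiveb f ->
  \det (pick_rows (upd A i (B + B')) f) =
  \det (pick_rows (upd A i B) f) + \det (pick_rows (upd A i B') f).
Proof.
move=> /injectiveP f_inj; set s := perm f_inj; set r0 := s^-1%g i.
have f_r0 : f r0 = i by rewrite -(permE f_inj) permKV.
have other_rows C : row' r0 (pick_rows (upd A i C) f) = row' r0 (pick_rows A f).
  apply/matrixP => r c; rewrite !mxE ffunE -f_r0.
  by rewrite (inj_eq f_inj) eq_sym (negbTE (neq_lift r0 r)).
rewrite (determinant_multilinear (B := pick_rows (upd A i B) f)
  (C := pick_rows (upd A i B') f) (b := 1) (c := 1) (i0 := r0)) ?mul1r ?other_rows //.
by apply/rowP => c; rewrite !scale1r !mxE !ffunE f_r0 eqxx mxE.
Qed.

Lemma injectiveb_im_ffun (f : {ffun 'I_n -> 'I_n}) : injectiveb f = (f @: setT == setT).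
Proof.
rewrite eqEcard subsetT /=; apply/injectiveP/idP => [f_inj | le_card].
  by rewrite card_imset.
have /imset_injP f_inj : #|f @: setT| == #|[set: 'I_n]|.
  by rewrite eqn_leq le_card leq_imset_card.
by move=> x y; apply: f_inj; rewrite inE.
Qed.

Section Formula.
Variable D : tuple -> R.
Hypothesis D_mixed : is_mixed_discriminant D.
Local Notation defect A f := (\det (pick_rows A f) - D [ffun j => A (f j)]).

Lemma mixed_discriminant_defect_subset (A : tuple) (S : {set 'I_n}) : all_psd A ->
  \sum_(f : {ffun 'I_n -> 'I_n} | f @: setT \subset S) defect A f = 0.
Proof.
move=> A_psd; pose lam k := ((k \in S)%:R : R).
have indicator (f : {ffun 'I_n -> 'I_n}) :
    \prod_j lam (f j) = (f @: setT \subset S)%:R.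
  rewrite sub_imset_pre.
  case: (boolP (setT \subset _)) => [/subsetP im_sub | /subsetPn[j _ fj_notin]].
    by apply: big1 => j _; have := im_sub j (in_setT j); rewrite inE /lam => ->.
  by rewrite (bigD1 j) //= /lam; rewrite inE in fj_notin; rewrite (negbTE fj_notin) mul0r.
rewrite big_mkcond /=.
transitivity (\sum_(f : {ffun 'I_n -> 'I_n}) (\prod_j lam (f j)) * defect A f).
  by apply: eq_bigr => f _; rewrite indicator; case: ifP; rewrite ?mul1r ?mul0r.
under eq_bigr do rewrite mulrBr.
by rewrite sumrB -det_sumZ_expand (D_mixed.2 _ A lam A_psd) ?subrr // => k; apply: ler0n.
Qed.

(* inclusion-exclusion over the image of [f], by strong induction on [#|S|] *)
Lemma mixed_discriminant_defect_im (A : tuple) (S : {set 'I_n}) : all_psd A ->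
  \sum_(f : {ffun 'I_n -> 'I_n} | f @: setT == S) defect A f = 0.
Proof.
move=> A_psd; elim: {S}_.+1 {-2}S (ltnSn #|S|) => // k IHk S lt_S_k.
have im_sub (U : {set 'I_n}) : U \subset S ->
    (fun f : {ffun 'I_n -> 'I_n} => (f @: setT \subset S) && (f @: setT == U)) =1
    (fun f : {ffun 'I_n -> 'I_n} => f @: setT == U).
  by move=> sub_US f /=; case: (eqVneq (f @: setT) U) => [->|]; rewrite ?sub_US ?andbF.
have := mixed_discriminant_defect_subset S A_psd.
rewrite (partition_big (fun f : {ffun 'I_n -> 'I_n} => f @: setT) 
  (fun U => U \subset S)) //=.
rewrite (bigD1 S) //= [X in _ + X]big1 ?addr0 => [defect_S|U /andP[sub_US neq_US]].
  by apply: etrans defect_S; apply: eq_bigl => f; rewrite im_sub.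
transitivity (\sum_(f : {ffun 'I_n -> 'I_n} | f @: setT == U) defect A f).
  by apply: eq_bigl => f; rewrite im_sub.
apply: IHk.
have : (#|U| < #|S|)%N by rewrite proper_card // properEneq neq_US.
by move: lt_S_k; clear; lia.
Qed.

Lemma mixed_discriminantE (A : tuple) : all_psd A ->
  D A = (\sum_(f : {ffun 'I_n -> 'I_n} | injectiveb f) \det (pick_rows A f)) / n`!%:R.
Proof.
move=> A_psd; apply/(canRL (mulfK _)); first by rewrite pnatr_eq0 -lt0n fact_gt0.
have -> : \sum_(f : {ffun 'I_n -> 'I_n} | injectiveb f) \det (pick_rows A f) =
          \sum_(f : {ffun 'I_n -> 'I_n} | injectiveb f) D [ffun j => A (f j)].
  apply/eqP; rewrite -subr_eq0 -sumrB; under eq_bigl do rewrite injectiveb_im_ffun.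
  exact/eqP/mixed_discriminant_defect_im.
rewrite (eq_bigr (fun _ => D A)) => [|f /injectiveP f_inj].
  by rewrite -big_set sumr_const card_inj_ffuns card_ord ffactnn mulr_natr.
have -> : [ffun j => A (f j)] = [ffun j => A (perm f_inj j)].
  by apply/ffunP => j; rewrite !ffunE permE.
exact: D_mixed.1.
Qed.

Lemma mixed_discriminant_multiadditive : multiadditive D.
Proof.
move=> A i B B' A_psd B_psd B'_psd.
rewrite !mixed_discriminantE; try by apply: all_psd_upd => //; apply: psdD.
rewrite -mulrDl -big_split /=.
by congr (_ / _); apply: eq_bigr => f; apply: det_pick_rows_upd_add.
Qed.

Lemma mixed_discriminant_rank1_rows (X : 'M[R]_n) :
  D (rank1_rows X) = \det X ^+ 2 / n`!%:R.
Proof.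
by rewrite mixed_discriminantE ?sum_det_pick_rows_rank1 //; apply: all_psd_rank1_rows.
Qed.

End Formula.
End MixedDiscriminant.

Section BoundedByMixedDiscriminant.
Variables (R : realType) (n : nat) (D F : {ffun 'I_n -> 'M[R]_n} -> R) (c : R).
Hypotheses (D_mixed : is_mixed_discriminant D) (F_add : multiadditive F).
Hypothesis F_ge0 : forall A, all_psd A -> 0 <= F A.
Hypothesis F_le : forall A, all_psd A -> F A <= c * D A.

Lemma F_rank1_rows_det0 (X : 'M[R]_n) : \det X = 0 -> F (rank1_rows X) = 0.
Proof.
move=> detX0; apply/le_anti/andP; split; last exact/F_ge0/all_psd_rank1_rows.
have := F_le (all_psd_rank1_rows X).
by rewrite (mixed_discriminant_rank1_rows D_mixed) detX0 expr0n mul0r mulr0.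
Qed.

Lemma F_rank1_rows_set_row (X : 'M[R]_n) i y :
  F (rank1_rows (set_row X i y)) * \det X ^+ 2 =
  F (rank1_rows X) * \det (set_row X i y) ^+ 2.
Proof.
have X_psd := all_psd_rank1_rows X.
have r1 (v : 'rV[R]_n) : psd (rank1 v) := psd_rank1 v.
rewrite -{2 3}[X](set_row_id X i).
apply: (quadratic_ker_proportional (q := fun y => F (rank1_rows (set_row X i y)))
                                   (l := fun y => \det (set_row X i y)))
  => [v | u h | t v | t a b | v /F_rank1_rows_det0 //].
- exact/F_ge0/all_psd_rank1_rows.
- rewrite !rank1_rows_set_row -(F_add i X_psd (r1 _) (r1 _)) rank1_parallelogram.
  rewrite (F_add i X_psd (psdD (r1 _) (r1 _)) (psdD (r1 _) (r1 _))).
  rewrite !(F_add i X_psd (r1 _) (r1 _)); lra.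
- by rewrite !rank1_rows_set_row rank1Z multiadditive_homo // sqr_ge0.
- exact: det_set_row_linear.
Qed.

Lemma F_rank1_rows (X : 'M[R]_n) : F (rank1_rows X) = F (rank1_rows 1%:M) * \det X ^+ 2.
Proof.
have [detX0 | detX_neq0] := eqVneq (\det X) 0.
  by rewrite F_rank1_rows_det0 // detX0 expr0n mulr0.
have ratio_row Y i v : \det Y != 0 -> \det (set_row Y i v) != 0 ->
    F (rank1_rows (set_row Y i v)) / \det (set_row Y i v) ^+ 2 =
    F (rank1_rows Y) / \det Y ^+ 2.
  move=> detY detYv; apply: (canLR (mulfK _)); first by rewrite expf_neq0.
  by rewrite mulrAC -F_rank1_rows_set_row mulfK // expf_neq0.
have det1_neq0 : \det (1%:M : 'M[R]_n) != 0 by rewrite det1 oner_neq0.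
have := invertible_row_invariant_const ratio_row detX_neq0 det1_neq0.
by rewrite det1 expr1n divr1 => <-; rewrite divfK // expf_neq0.
Qed.

End BoundedByMixedDiscriminant.

Theorem corollary3 (R : realType) (n : nat) (D F : {ffun 'I_n -> 'M[R]_n} -> R) :
  (1 <= n)%N ->
  is_mixed_discriminant D ->
  (forall A, all_psd A -> 0 <= F A) ->
  multiadditive F ->
  (exists c : R, forall A, all_psd A -> F A <= c * D A) ->
  exists a : R, forall A, all_psd A -> F A = a * D A.
Proof.
move=> _ D_mixed F_ge0 F_add [c F_le].
exists (F (rank1_rows 1%:M) * n`!%:R).
apply: multiadditive_eq_rank1_rows => // [A i B B' A_psd B_psd B'_psd | X].
  by rewrite mixed_discriminant_multiadditive // mulrDr.
rewrite (F_rank1_rows D_mixed F_add F_ge0 F_le) (mixed_discriminant_rank1_rows D_mixed).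
by field; rewrite pnatr_eq0 -lt0n fact_gt0.
Qed.
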